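(* Let $C>0$ and $f:\mathbb R\to\mathbb R$, $f(x)=\log(1+e^{-x})$. Then for all $a\in[-C,C]$ and all $b\in\mathbb R$, \[f(a)\ge f(b)+f'(b)(a-b)+\frac{e^b}{2(1+C)}f'(b)^2(a-b)^2.\] *)

From Stdlib Require Import Reals Lra.
From Coquelicot Require Import Coquelicot.
Open Scope R_scope.

Definition floss (x : R) : R := ln (1 + exp (- x)).

(* With [f'' x = e^x / (1 + e^x)^2] one has [e^b f'(b)^2 = f''(b)], so the claim
   bounds the Bregman divergence [D(a,b) = f(a) - f(b) - f'(b)(a - b)] from below.
   [D] dominates the Bregman divergence of any comparison function whose second
   derivative stays below [f''] between [b] and [a].  Since [f(-x) = f(x) + x],
   [D(-a,-b) = D(a,b)], so we may take [b <= a].  If [|a| <= |b|], then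
   [f'' >= f''(b)] on [[b,a]] because [f''] decreases in [|x|], and
   [D >= f''(b) (a - b)^2 / 2].  Otherwise [|b| < |a| <= C], so [r = a - b <= 2C];
   the self-concordance bound [f''(x) >= f''(b) e^(b-x)] for [x >= b] gives
   [D >= f''(b) (e^(-r) + r - 1) >= f''(b) r^2 / (2 + r) >= f''(b) r^2 / (2(1 + C))]. *)

From Stdlib Require Import Reals Lra Psatz.
From Coquelicot Require Import Coquelicot.
Open Scope R_scope.

Lemma tangent_le_of_deriv2_nonneg (g g' g'' : R -> R) (b a : R) :
  b <= a ->
  (forall x, b <= x <= a -> is_derive g x (g' x)) ->
  (forall x, b <= x <= a -> is_derive g' x (g'' x)) ->
  (forall x, b <= x <= a -> 0 <= g'' x) ->
  g b + g' b * (a - b) <= g a.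
Proof.
  intros [Hba | ->] Hg Hg' Hg''; [|lra].
  destruct (MVT_cor2 g g' b a Hba) as [c [Hgc Hc]].
  { intros x Hx; apply is_derive_Reals, Hg, Hx. }
  destruct (MVT_cor2 g' g'' b c (proj1 Hc)) as [d [Hg'd Hd]].
  { intros x Hx; apply is_derive_Reals, Hg'; lra. }
  assert (Hslope : g' b <= g' c) by (pose proof (Hg'' d ltac:(lra)); nra).
  nra.
Qed.

Lemma bregman_le_of_deriv2_le (g g' g'' p p' p'' : R -> R) (b a : R) :
  b <= a ->
  (forall x, b <= x <= a -> is_derive g x (g' x)) ->
  (forall x, b <= x <= a -> is_derive g' x (g'' x)) ->
  (forall x, b <= x <= a -> is_derive p x (p' x)) ->
  (forall x, b <= x <= a -> is_derive p' x (p'' x)) ->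
  (forall x, b <= x <= a -> p'' x <= g'' x) ->
  p a - p b - p' b * (a - b) <= g a - g b - g' b * (a - b).
Proof.
  intros Hba Hg Hg' Hp Hp' Hle.
  enough ((g b - p b) + (g' b - p' b) * (a - b) <= g a - p a) by lra.
  apply (tangent_le_of_deriv2_nonneg (fun x => g x - p x) (fun x => g' x - p' x)
           (fun x => g'' x - p'' x)); auto.
  - intros x Hx; exact (is_derive_minus _ _ _ _ _ (Hg x Hx) (Hp x Hx)).
  - intros x Hx; exact (is_derive_minus _ _ _ _ _ (Hg' x Hx) (Hp' x Hx)).
  - intros x Hx; pose proof (Hle x Hx); lra.
Qed.

Lemma exp_le_compat (x y : R) : x <= y -> exp x <= exp y.
Proof. intros [Hxy | ->]; [left; apply exp_increasing, Hxy | lra]. Qed.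

Lemma exp_neg_ge_pade (r : R) : 0 <= r -> 2 - r <= exp (- r) * (2 + r).
Proof.
  intros Hr.
  (* [r |-> e^(-r) (2 + r) + r] is convex, with tangent line [2] at [0]. *)
  pose proof (tangent_le_of_deriv2_nonneg (fun r => exp (- r) * (2 + r) + r)
                (fun r => 1 - exp (- r) * (1 + r)) (fun r => r * exp (- r)) 0 r Hr)
    as Htangent.
  cbv beta in Htangent; rewrite Ropp_0, exp_0 in Htangent.
  enough (2 <= exp (- r) * (2 + r) + r) by lra.
  eapply Rle_trans; [|apply Htangent]; [lra | | |].
  - intros x _; auto_derive; [exact I | ring].
  - intros x _; auto_derive; [exact I | ring].
  - intros x Hx; pose proof (exp_pos (- x)); nra.
Qed.

Lemma sqr_div_le_exp_neg_sub (r : R) :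
  0 <= r -> r ^ 2 / (2 + r) <= exp (- r) + r - 1.
Proof.
  intros Hr; pose proof (exp_neg_ge_pade r Hr).
  apply Rle_div_l; nra.
Qed.

Definition floss' (x : R) : R := - / (1 + exp x).
Definition floss'' (x : R) : R := exp x / (1 + exp x) ^ 2.

Lemma is_derive_floss (x : R) : is_derive floss x (floss' x).
Proof.
  unfold floss, floss'; pose proof (exp_pos x); pose proof (exp_pos (- x)).
  auto_derive; [lra|].
  rewrite exp_Ropp; field; lra.
Qed.

Lemma Derive_floss (x : R) : Derive floss x = floss' x.
Proof. exact (is_derive_unique _ _ _ (is_derive_floss x)). Qed.

Lemma is_derive_floss' (x : R) : is_derive floss' x (floss'' x).
Proof.
  unfold floss', floss''; pose proof (exp_pos x).
  auto_derive; [lra | field; lra].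
Qed.

Lemma floss_opp (x : R) : floss (- x) = floss x + x.
Proof.
  unfold floss; rewrite Ropp_involutive.
  pose proof (exp_pos x).
  replace (1 + exp x) with (exp x * (1 + exp (- x)))
    by (rewrite exp_Ropp; field; lra).
  rewrite ln_mult, ln_exp by (pose proof (exp_pos (- x)); lra).
  ring.
Qed.

Lemma floss'_opp (x : R) : floss' (- x) = - floss' x - 1.
Proof.
  unfold floss'; rewrite exp_Ropp; pose proof (exp_pos x).
  field; lra.
Qed.

Lemma floss''_opp (x : R) : floss'' (- x) = floss'' x.
Proof.
  unfold floss''; rewrite exp_Ropp; pose proof (exp_pos x).
  field; lra.
Qed.

Lemma exp_mul_floss'_sqr (x : R) : exp x * floss' x ^ 2 = floss'' x.
Proof. unfold floss', floss''; pose proof (exp_pos x); field; lra. Qed.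

Lemma floss''_pos (x : R) : 0 < floss'' x.
Proof. unfold floss''; pose proof (exp_pos x); apply Rdiv_lt_0_compat; nra. Qed.

Lemma floss''_le_Rabs (x y : R) : Rabs x <= Rabs y -> floss'' y <= floss'' x.
Proof.
  intros Hxy; pose proof (exp_pos x); pose proof (exp_pos y).
  assert (Hsign : 0 <= (exp x - exp y) * (1 - exp (x + y))).
  { destruct (Rle_dec 0 y).
    - rewrite (Rabs_right y), Rabs_le_between in Hxy by lra.
      pose proof (exp_le_compat x y); pose proof (exp_le_compat 0 (x + y)).
      rewrite exp_0 in *; nra.
    - rewrite (Rabs_left y), Rabs_le_between in Hxy by lra.
      pose proof (exp_le_compat y x); pose proof (exp_le_compat (x + y) 0).
      rewrite exp_0 in *; nra. }
  rewrite exp_plus in Hsign.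
  enough (0 <= floss'' x - floss'' y) by lra.
  replace (floss'' x - floss'' y)
    with ((exp x - exp y) * (1 - exp x * exp y) / ((1 + exp x) ^ 2 * (1 + exp y) ^ 2))
    by (unfold floss''; field; lra).
  apply Rdiv_le_0_compat; [lra | apply Rmult_lt_0_compat; apply pow_lt; lra].
Qed.

Lemma floss''_mul_exp_le (b x : R) : b <= x -> floss'' b * exp (b - x) <= floss'' x.
Proof.
  intros Hbx; pose proof (exp_pos x); pose proof (exp_pos b).
  pose proof (exp_le_compat b x Hbx).
  assert (Hprod : 0 < exp x * exp b) by (apply Rmult_lt_0_compat; lra).
  unfold Rminus; rewrite exp_plus, exp_Ropp.
  enough (0 <= floss'' x - floss'' b * (exp b * / exp x)) by lra.
  replace (floss'' x - floss'' b * (exp b * / exp x))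
    with ((exp x - exp b) * (exp x + exp b + 2 * exp x * exp b)
          / (exp x * (1 + exp x) ^ 2 * (1 + exp b) ^ 2))
    by (unfold floss''; field; lra).
  apply Rdiv_le_0_compat; [nra |].
  repeat apply Rmult_lt_0_compat; try apply pow_lt; lra.
Qed.

Definition floss_bregman (a b : R) : R := floss a - floss b - floss' b * (a - b).

Lemma floss_bregman_opp (a b : R) : floss_bregman (- a) (- b) = floss_bregman a b.
Proof. unfold floss_bregman; rewrite !floss_opp, floss'_opp; ring. Qed.

Lemma floss_bregman_ge_quadratic (a b : R) :
  b <= a -> Rabs a <= Rabs b -> floss'' b / 2 * (a - b) ^ 2 <= floss_bregman a b.
Proof.
  intros Hba Hab.
  pose proof (bregman_le_of_deriv2_le floss floss' floss''
    (fun x => floss'' b / 2 * (x - b) ^ 2) (fun x => floss'' b * (x - b))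
    (fun _ => floss'' b) b a Hba (fun x _ => is_derive_floss x)
    (fun x _ => is_derive_floss' x)) as Hcmp.
  unfold floss_bregman; cbv beta in Hcmp.
  replace (floss'' b / 2 * (a - b) ^ 2)
    with (floss'' b / 2 * (a - b) ^ 2 - floss'' b / 2 * (b - b) ^ 2
          - floss'' b * (b - b) * (a - b)) by ring.
  apply Hcmp.
  - intros x _; auto_derive; [exact I | field].
  - intros x _; auto_derive; [exact I | ring].
  - intros x Hx; apply floss''_le_Rabs.
    pose proof (RmaxAbs b x a (proj1 Hx) (proj2 Hx)).
    rewrite Rmax_left in * by lra; lra.
Qed.

Lemma floss_bregman_ge_exp (a b : R) :
  b <= a -> floss'' b * (exp (- (a - b)) + (a - b) - 1) <= floss_bregman a b.
Proof.
  intros Hba.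
  pose proof (bregman_le_of_deriv2_le floss floss' floss''
    (fun x => floss'' b * exp (b - x)) (fun x => - floss'' b * exp (b - x))
    (fun x => floss'' b * exp (b - x)) b a Hba (fun x _ => is_derive_floss x)
    (fun x _ => is_derive_floss' x)) as Hcmp.
  unfold floss_bregman; cbv beta in Hcmp.
  rewrite Rminus_diag, exp_0 in Hcmp.
  replace (- (a - b)) with (b - a) by ring.
  replace (floss'' b * (exp (b - a) + (a - b) - 1))
    with (floss'' b * exp (b - a) - floss'' b * 1 - - floss'' b * 1 * (a - b)) by ring.
  apply Hcmp.
  - intros x _; auto_derive; [exact I | unfold Rminus; ring].
  - intros x _; auto_derive; [exact I | unfold Rminus; ring].
  - intros x Hx; apply floss''_mul_exp_le, Hx.
Qed.

Lemma floss_bregman_ge (C a b : R) :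
  Rabs a <= C -> b <= a ->
  floss'' b / (2 * (1 + C)) * (a - b) ^ 2 <= floss_bregman a b.
Proof.
  intros HaC Hba; pose proof (floss''_pos b); pose proof (Rabs_pos a).
  destruct (Rle_dec (Rabs a) (Rabs b)) as [Hab | Hab].
  - eapply Rle_trans; [| exact (floss_bregman_ge_quadratic a b Hba Hab)].
    apply Rmult_le_compat_r; [apply pow2_ge_0 |].
    apply Rmult_le_compat_l; [lra | apply Rinv_le_contravar; lra].
  - assert (Hdist : a - b <= 2 * C).
    { assert (HbC : Rabs b <= C) by lra.
      apply Rabs_le_between in HaC, HbC; lra. }
    pose proof (floss_bregman_ge_exp a b Hba).
    pose proof (sqr_div_le_exp_neg_sub (a - b) ltac:(lra)).
    enough ((a - b) ^ 2 / (2 * (1 + C)) <= (a - b) ^ 2 / (2 + (a - b))).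
    { unfold Rdiv in *; nra. }
    apply Rmult_le_compat_l; [nra | apply Rinv_le_contravar; lra].
Qed.

Theorem lemma3 (C : R) (HC : 0 < C) (a b : R) (Ha : -C <= a <= C) :
  floss a >= floss b + Derive floss b * (a - b)
         + exp b / (2 * (1 + C)) * (Derive floss b) ^ 2 * (a - b) ^ 2.
Proof.
  rewrite Derive_floss.
  replace (exp b / (2 * (1 + C)) * floss' b ^ 2) with (floss'' b / (2 * (1 + C)))
    by (rewrite <- exp_mul_floss'_sqr; field; lra).
  enough (floss'' b / (2 * (1 + C)) * (a - b) ^ 2 <= floss_bregman a b)
    by (unfold floss_bregman in *; lra).
  destruct (Rle_dec b a) as [Hba | Hab].
  - apply floss_bregman_ge; [apply Rabs_le_between; lra | exact Hba].
  - rewrite <- floss_bregman_opp, <- floss''_opp.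
    replace ((a - b) ^ 2) with ((- a - - b) ^ 2) by ring.
    apply floss_bregman_ge; [rewrite Rabs_Ropp; apply Rabs_le_between; lra | lra].
Qed.
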